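(* Let $X$ be a gamble and $\varepsilon>0$. (a) Let $\underline{P}$ be defined on $\mathcal{D}_0^{\le}(X)=\{I_{(X\le-\varepsilon)}, -X^2\}$, and let $\mathcal{M}_0^{\le}(X)$ be the set of dF-coherent previsions $P$ on $\mathcal{D}_0^{\le}(X)\cup\{X\}$ with $P\ge\underline{P}$ on $\mathcal{D}_0^{\le}(X)$ and $P(X)=0$. If $\mathcal{M}_0^{\le}(X)\neq\emptyset$, then $\underline{P}(X\le-\varepsilon)\le\frac{\overline{P}(X^2)}{\overline{P}(X^2)+\varepsilon^2}$. (b) Let $\underline{P}$ be defined on $\mathcal{D}_0^{\ge}(X)=\{I_{(X\ge\varepsilon)}, -X^2\}$, and let $\mathcal{M}_0^{\ge}(X)$ be the set of dF-coherent previsions $P$ on $\mathcal{D}_0^{\ge}(X)\cup\{X\}$ with $P\ge\underline{P}$ on $\mathcal{D}_0^{\ge}(X)$ and $P(X)=0$. If $\mathcal{M}_0^{\ge}(X)\neq\emptyset$, then $\underline{P}(X\ge\varepsilon)\le\frac{\overline{P}(X^2)}{\overline{P}(X^2)+\varepsilon^2}$. Here $\overline{P}(X^2)=-\underline{P}(-X^2)$.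
   Context: $\Pi$ is a partition of the sure event into pairwise disjoint non-impossible events; a gamble is a bounded map $X:\Pi\to\mathbb{R}$; $(X\le c)$, $(X\ge c)$ are events with indicators $I_{(X\le c)}$, $I_{(X\ge c)}$, and $\underline{P}(X\le c)=\underline{P}(I_{(X\le c)})$. A lower prevision is just a real-valued map on a set of gambles; no consistency is assumed beyond the stated hypothesis. A map $P:\mathcal{D}\to\mathbb{R}$ is a dF-coherent prevision iff for all $n\in\mathbb{N}$, $s_0,\dots,s_n\in\mathbb{R}$, $X_0,\dots,X_n\in\mathcal{D}$, $\sup\sum_{i=0}^n s_i(X_i-P(X_i))\ge 0$. *)

From mathcomp Require Import all_boot all_order all_algebra.
From mathcomp Require Import all_classical all_reals.
Set Implicit Arguments. Unset Strict Implicit. Unset Printing Implicit Defensive.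
Import Order.TTheory GRing.Theory Num.Theory.
Local Open Scope classical_set_scope.
Local Open Scope ring_scope.

Section Gambles.
Variables (R : realType) (Pi : Type).

Definition is_gamble (X : Pi -> R) : Prop :=
  exists M : R, forall w, `|X w| <= M.

Definition ind_le (X : Pi -> R) (c : R) : Pi -> R :=
  fun w => if X w <= c then 1 else 0.
Definition ind_ge (X : Pi -> R) (c : R) : Pi -> R :=
  fun w => if c <= X w then 1 else 0.

(* dF-coherence of a prevision P on the set of gambles D
   (P is a map on all functions, only its values on D matter) *)
Definition dF_coherent (D : set (Pi -> R)) (P : (Pi -> R) -> R) : Prop :=
  forall (n : nat) (s : 'I_n.+1 -> R) (Xs : 'I_n.+1 -> (Pi -> R)),
    (forall i, D (Xs i)) ->
    0 <= sup [set (\sum_(i < n.+1) s i * (Xs i w - P (Xs i)))%R | w in [set: Pi]].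

Definition M0 (X : Pi -> R) (D0 : set (Pi -> R)) (lowP : (Pi -> R) -> R)
  : set ((Pi -> R) -> R) :=
  [set P | dF_coherent (D0 `|` [set X]) P /\
           (forall Y, D0 Y -> lowP Y <= P Y) /\ P X = 0].

Definition sqg (X : Pi -> R) : Pi -> R := fun w => - (X w ^+ 2).

(* upper prevision of X^2 by conjugacy *)
Definition upP_sq (lowP : (Pi -> R) -> R) (X : Pi -> R) : R := - lowP (sqg X).

End Gambles.

(* The bound is Cantelli's inequality for coherent previsions.  For any shift
   [d] and [k >= 0] with [Y <= k (X - d)^2] pointwise, coherence applied to the
   gain [(Y - P Y) + k (-X^2 - P(-X^2)) + 2 k d (X - P X)] gives
   [P Y <= k (d^2 + Pbar(X^2))] when [P X = 0].  The indicator of [X <= -eps]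
   is below [((X - c)/(c + eps))^2] for every [c >= 0], and the choice
   [c = Pbar(X^2) / eps] minimises the resulting bound to
   [Pbar(X^2) / (Pbar(X^2) + eps^2)]; the case [X >= eps] is symmetric. *)
From mathcomp Require Import all_boot all_order all_algebra.
From mathcomp Require Import all_classical all_reals.
From mathcomp Require Import ring lra.
Set Implicit Arguments. Unset Strict Implicit. Unset Printing Implicit Defensive.
Import Order.TTheory GRing.Theory Num.Theory.
Local Open Scope classical_set_scope.
Local Open Scope ring_scope.

Section Coherence.
Variables (R : realType) (Pi : Type) (w0 : Pi).
Variables (D : set (Pi -> R)) (P : (Pi -> R) -> R).
Hypothesis coherentP : dF_coherent D P.

Lemma dF_coherent_gain_bound (n : nat) (s : 'I_n.+1 -> R)
    (Xs : 'I_n.+1 -> (Pi -> R)) (B : R) :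
  (forall i, D (Xs i)) ->
  (forall w, \sum_(i < n.+1) s i * (Xs i w - P (Xs i)) <= B) -> 0 <= B.
Proof.
move=> DXs gainB; apply: le_trans (@coherentP n s Xs DXs) _.
apply: ge_sup; first by exists (\sum_(i < n.+1) s i * (Xs i w0 - P (Xs i))), w0.
by move=> _ [w _ <-].
Qed.

Lemma dF_coherent_upper_sq_ge0 (X : Pi -> R) : D (sqg X) -> 0 <= - P (sqg X).
Proof.
move=> Dsq; apply: (@dF_coherent_gain_bound 0 (fun=> 1) (fun=> sqg X)) => // w.
rewrite big_ord_recl big_ord0 addr0 mul1r /sqg.
have := sqr_ge0 (X w); lra.
Qed.

Lemma dF_coherent_le_quadratic (X Y : Pi -> R) (k d : R) :
  D Y -> D (sqg X) -> D X -> P X = 0 ->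
  (forall w, Y w <= k * (X w - d) ^+ 2) ->
  P Y <= k * (d ^+ 2 - P (sqg X)).
Proof.
move=> DY Dsq DX PX0 Y_le.
pose s (i : 'I_3) : R := match val i with 0 => 1 | 1 => k | _ => 2 * k * d end.
pose Xs (i : 'I_3) := match val i with 0 => Y | 1 => sqg X | _ => X end.
have DXs : forall i, D (Xs i) by move=> [[|[|?]] ?].
suff: 0 <= k * d ^+ 2 - P Y - k * P (sqg X) by lra.
apply: (@dF_coherent_gain_bound 2 s Xs) => // w.
rewrite !big_ord_recl big_ord0 /s /Xs /= PX0 /sqg.
have := Y_le w; rewrite !expr2; lra.
Qed.

End Coherence.

Section LowerPrevision.
Variables (R : realType) (Pi : Type) (w0 : Pi).
Variables (X Y : Pi -> R) (lowP : (Pi -> R) -> R).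
Hypothesis M0_neq0 : M0 X [set Y; sqg X] lowP !=set0.

Lemma M0_upP_sq_ge0 : 0 <= upP_sq lowP X.
Proof.
case: M0_neq0 => P [coherentP [lowP_le _]].
have := dF_coherent_upper_sq_ge0 w0 coherentP (or_introl (or_intror erefl)).
have := lowP_le (sqg X) (or_intror erefl); rewrite /upP_sq; lra.
Qed.

Lemma M0_le_quadratic (k d : R) : 0 <= k ->
  (forall w, Y w <= k * (X w - d) ^+ 2) ->
  lowP Y <= k * (d ^+ 2 + upP_sq lowP X).
Proof.
move=> k_ge0 Y_le; case: M0_neq0 => P [coherentP [lowP_le PX0]].
have := dF_coherent_le_quadratic w0 coherentP (or_introl (or_introl erefl))
  (or_introl (or_intror erefl)) (or_intror erefl) PX0 Y_le.
have : k * - P (sqg X) <= k * upP_sq lowP X.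
  by rewrite ler_wpM2l // lerN2 lowP_le //; right.
have := lowP_le Y (or_introl erefl); lra.
Qed.

End LowerPrevision.

Lemma ind_le_le_sqr (R : realType) (Pi : Type) (X : Pi -> R) (c eps : R)
    (w : Pi) : 0 <= c -> 0 < eps ->
  ind_le X (- eps) w <= (c + eps)^-1 ^+ 2 * (X w - c) ^+ 2.
Proof.
move=> c_ge0 eps_gt0; rewrite /ind_le.
case: ifP => [X_le|_]; last by rewrite mulr_ge0 ?sqr_ge0.
have ce_gt0 : 0 < c + eps by lra.
rewrite -(mulVf (expf_neq0 2 (lt0r_neq0 ce_gt0))) -exprVn ler_wpM2l ?sqr_ge0 //.
rewrite !expr2; nra.
Qed.

Lemma ind_ge_le_sqr (R : realType) (Pi : Type) (X : Pi -> R) (c eps : R)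
    (w : Pi) : 0 <= c -> 0 < eps ->
  ind_ge X eps w <= (c + eps)^-1 ^+ 2 * (X w - - c) ^+ 2.
Proof.
move=> c_ge0 eps_gt0.
have := ind_le_le_sqr (fun w => - X w) w c_ge0 eps_gt0.
by rewrite /ind_le /ind_ge lerN2 -opprD sqrrN opprK.
Qed.

Lemma cantelli_optimum (R : realType) (u eps : R) : 0 < eps -> 0 <= u ->
  (u / eps + eps)^-1 ^+ 2 * ((u / eps) ^+ 2 + u) = u / (u + eps ^+ 2).
Proof.
move=> eps_gt0 u_ge0.
have den_gt0 : 0 < u + eps ^+ 2 by have := exprn_gt0 2 eps_gt0; lra.
have -> : u / eps + eps = (u + eps ^+ 2) / eps by field; rewrite lt0r_neq0.
by field; rewrite !lt0r_neq0.
Qed.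

Theorem proposition4 (R : realType) (Pi : Type) (w0 : Pi)
  (X : Pi -> R) (hX : is_gamble X) (eps : R) (heps : 0 < eps) :
  (forall lowP : (Pi -> R) -> R,
     M0 X [set ind_le X (- eps); sqg X] lowP !=set0 ->
     lowP (ind_le X (- eps)) <=
       upP_sq lowP X / (upP_sq lowP X + eps ^+ 2)) /\
  (forall lowP : (Pi -> R) -> R,
     M0 X [set ind_ge X eps; sqg X] lowP !=set0 ->
     lowP (ind_ge X eps) <=
       upP_sq lowP X / (upP_sq lowP X + eps ^+ 2)).
Proof.
split=> lowP M0_neq0.
all: have u_ge0 := M0_upP_sq_ge0 w0 M0_neq0.
all: have c_ge0 : 0 <= upP_sq lowP X / eps by rewrite divr_ge0 // ltW.
all: rewrite -(cantelli_optimum heps u_ge0).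
- apply: (M0_le_quadratic w0 M0_neq0); first exact: sqr_ge0.
  by move=> w; apply: ind_le_le_sqr.
- rewrite -[(_ / eps) ^+ 2]sqrrN.
  apply: (M0_le_quadratic w0 M0_neq0); first exact: sqr_ge0.
  by move=> w; apply: ind_ge_le_sqr.
Qed.
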